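(* Let $V$, $R$, the radius levels $r_1<\dots<r_k=R$, $G_R$ and $G_\alpha$ be as in the context, and let $0<\alpha\le 5\pi/6$. Then for all $u,v\in V$: $u$ and $v$ are connected by a path in $G_\alpha$ if and only if they are connected by a path in $G_R$.
   Context: Let $V$ be a finite set of pairwise distinct points (nodes) in the Euclidean plane, $d$ the Euclidean distance, and $R>0$. Let $G_R=(V,E)$ be the undirected graph with $E=\{\{u,v\}: u\neq v,\ d(u,v)\le R\}$. Fix a finite increasing sequence of radius levels $0<r_1<r_2<\dots<r_k=R$. For $u\in V$ and $1\le i\le k$ let $S_i(u)=\{v\in V\setminus\{u\}: d(u,v)\le r_i\}$. For $0<\alpha<2\pi$, a closed cone of width $\alpha$ with apex $u$ is a set $\{u+t(\cos\varphi,\sin\varphi): t\ge 0,\ \varphi\in[\theta-\alpha/2,\theta+\alpha/2]\}$ for some $\theta$; $\mathrm{cone}(u,\alpha,v)$ denotes the closed cone of width $\alpha$ with apex $u$ bisected by the ray from $u$ through $v$. A finite set $S\subseteq V\setminus\{u\}$ has an $\alpha$-gap (at $u$) if some closed cone of width $\alpha$ with apex $u$ contains no node of $S$ (in particular $\emptyset$ has an $\alpha$-gap). The algorithm CBTC($\alpha$) assigns to each $u$ the index $i_u$ = the least $i\in\{1,\dots,k\}$ such that $S_i(u)$ has no $\alpha$-gap, or $i_u=k$ if there is no such $i$; set $N_\alpha(u)=S_{i_u}(u)$ and $N_\alpha=\{(u,v): v\in N_\alpha(u)\}$. Let $E_\alpha=\{\{u,v\}: (u,v)\in N_\alpha \text{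 or } (v,u)\in N_\alpha\}$ (the symmetric closure of $N_\alpha$) and $G_\alpha=(V,E_\alpha)$. *)

From Stdlib Require Import Reals Lra List Relations.
Import ListNotations.
Open Scope R_scope.

Definition point := (R * R)%type.

Definition dist (p q : point) : R :=
  sqrt ((fst p - fst q) ^ 2 + (snd p - snd q) ^ 2).

Definition in_cone (u : point) (a th : R) (p : point) : Prop :=
  exists t phi, 0 <= t /\ th - a / 2 <= phi <= th + a / 2 /\
    p = (fst u + t * cos phi, snd u + t * sin phi).

(* S_i(u) : nodes other than u within distance r_i (levels r indexed 1..k) *)
Definition S_lvl (V : list point) (r : nat -> R) (i : nat) (u v : point) : Prop :=
  In v V /\ v <> u /\ dist u v <= r i.

Definition has_gap (S : point -> Prop) (u : point) (a : R) : Prop :=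
  exists th, forall v, S v -> ~ in_cone u a th v.

(* i is the index i_u chosen by CBTC(a) at node u *)
Definition cbtc_index (V : list point) (r : nat -> R) (k : nat) (a : R)
    (u : point) (i : nat) : Prop :=
  ((1 <= i <= k)%nat /\ ~ has_gap (S_lvl V r i u) u a /\
     forall j, (1 <= j < i)%nat -> has_gap (S_lvl V r j u) u a)
  \/ (i = k /\ forall j, (1 <= j <= k)%nat -> has_gap (S_lvl V r j u) u a).

Definition N_alpha (V : list point) (r : nat -> R) (k : nat) (a : R)
    (u v : point) : Prop :=
  exists i, cbtc_index V r k a u i /\ S_lvl V r i u v.

Definition E_alpha (V : list point) (r : nat -> R) (k : nat) (a : R)
    (u v : point) : Prop :=
  N_alpha V r k a u v \/ N_alpha V r k a v u.

Definition E_R (V : list point) (Rmax : R) (u v : point) : Prop :=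
  In u V /\ In v V /\ u <> v /\ dist u v <= Rmax.

Definition connected (V : list point) (E : point -> point -> Prop) (u v : point) : Prop :=
  clos_refl_trans point (fun x y => In x V /\ In y V /\ E x y) u v.

(* If CBTC drops an edge uv of G_R, with d = |uv|, both u and v stopped at a level below d
   whose neighbourhood has no gap of width 5 PI / 6 >= alpha.  Among these neighbours take the
   one whose direction deviates least from the segment, say y at v with deviation m.  Unless a
   neighbour of one endpoint is already closer than d to the other, m > PI / 3, and the absence
   of gaps at u yields a neighbour x of u on the same side of uv whose deviation t satisfies
   m <= t <= 5 PI / 6 - m; the law of cosines then gives |xy| < d.  Either way u and v are
   joined through strictly shorter edges, so induction on the length of the edge shows that
   every edge of G_R is bridged by a path of G_alpha. *)

From Pilot Require Import Defs.
From Stdlib Require Import Reals List Relations.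
From Stdlib Require Import Arith Lra Psatz Classical Lia.
Open Scope R_scope.
Local Notation dist := Defs.dist.

Definition sqd (p q : point) : R := (fst p - fst q) ^ 2 + (snd p - snd q) ^ 2.

Lemma sqd_ge0 (p q : point) : 0 <= sqd p q.
Proof.
  unfold sqd. pose proof (pow2_ge_0 (fst p - fst q)). pose proof (pow2_ge_0 (snd p - snd q)). lra.
Qed.

Lemma sqd_comm (p q : point) : sqd p q = sqd q p.
Proof. unfold sqd; ring. Qed.

Lemma sqd_gt0 (p q : point) : p <> q -> 0 < sqd p q.
Proof.
  destruct p as [p1 p2], q as [q1 q2]; unfold sqd; simpl; intros Hpq.
  pose proof (pow2_ge_0 (p1 - q1)); pose proof (pow2_ge_0 (p2 - q2)).
  destruct (Req_dec p1 q1) as [->|H1]; [destruct (Req_dec p2 q2) as [->|H2]|].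
  - congruence.
  - destruct (Rdichotomy _ _ H2); nra.
  - destruct (Rdichotomy _ _ H1); nra.
Qed.

Lemma dist_comm (p q : point) : dist p q = dist q p.
Proof. unfold dist. f_equal. ring. Qed.

Lemma dist_gt0 (p q : point) : p <> q -> 0 < dist p q.
Proof. intros Hpq. apply sqrt_lt_R0, sqd_gt0, Hpq. Qed.

Lemma dist_lt_of_sqd (p q : point) (d : R) : 0 < d -> sqd p q < d * d -> dist p q < d.
Proof.
  intros Hd H. rewrite <- (sqrt_square d) by lra.
  apply sqrt_lt_1; [apply sqd_ge0 | nra | exact H].
Qed.

Lemma sqd_ge_of_dist (p q : point) (d : R) : 0 <= d -> d <= dist p q -> d * d <= sqd p q.
Proof.
  intros Hd H. pose proof (sqrt_sqrt _ (sqd_ge0 p q)). unfold dist in H. fold (sqd p q) in H. nra.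
Qed.

Lemma cos2_plus_sin2 (t : R) : cos t ^ 2 + sin t ^ 2 = 1.
Proof. pose proof (sin2_cos2 t) as H; unfold Rsqr in H; lra. Qed.

(** * Polar angles *)

Definition arg (X Y : R) : R :=
  let c := acos (X / sqrt (X ^ 2 + Y ^ 2)) in if Rle_dec 0 Y then c else - c.

Lemma arg_spec (X Y : R) : 0 < X ^ 2 + Y ^ 2 ->
  - PI < arg X Y <= PI /\
  X = sqrt (X ^ 2 + Y ^ 2) * cos (arg X Y) /\ Y = sqrt (X ^ 2 + Y ^ 2) * sin (arg X Y).
Proof.
  intros Hpos. set (n := sqrt (X ^ 2 + Y ^ 2)).
  assert (Hn : 0 < n) by (apply sqrt_lt_R0; lra).
  assert (Hn2 : n * n = X ^ 2 + Y ^ 2) by (apply sqrt_sqrt; lra).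
  assert (HXn : -1 <= X / n <= 1).
  { split; apply (Rmult_le_reg_r n); try lra; unfold Rdiv; rewrite Rmult_assoc, Rinv_l by lra; nra. }
  assert (HY : sqrt (1 - (X / n)²) = Rabs Y / n).
  { rewrite <- (sqrt_Rsqr (Rabs Y / n))
      by (apply Rmult_le_pos; [apply Rabs_pos | left; apply Rinv_0_lt_compat; lra]).
    f_equal. rewrite !Rsqr_div', <- Rsqr_abs. unfold Rsqr. field_simplify_eq; [nra | lra]. }
  pose proof (acos_bound (X / n)) as Hb. pose proof PI_RGT_0.
  unfold arg; fold n. destruct (Rle_dec 0 Y) as [HY0|HY0].
  - rewrite cos_acos, sin_acos, HY, Rabs_pos_eq by lra.
    repeat split; try lra; field; lra.
  - rewrite cos_neg, sin_neg, cos_acos, sin_acos, HY, Rabs_left by lra.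
    assert (X / n <> -1).
    { intros E. assert (X = - n) by (replace X with (X / n * n) by (field; lra); rewrite E; ring).
      nra. }
    assert (acos (X / n) < PI).
    { destruct (Req_dec (X / n) 1) as [->|E1]; [rewrite acos_1; lra|].
      apply acos_bound_lt; lra. }
    repeat split; try lra; field; lra.
Qed.

Definition polar_angle (c : point) (b : R) (x : point) : R :=
  arg ((fst x - fst c) * cos b + (snd x - snd c) * sin b)
      (- (fst x - fst c) * sin b + (snd x - snd c) * cos b).

Lemma polar_angle_spec (c x : point) (b : R) : x <> c ->
  - PI < polar_angle c b x <= PI /\
  fst x - fst c = dist c x * cos (b + polar_angle c b x) /\
  snd x - snd c = dist c x * sin (b + polar_angle c b x).
Proof.
  intros Hxc. unfold polar_angle.
  set (qx := fst x - fst c); set (qy := snd x - snd c).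
  set (X := qx * cos b + qy * sin b); set (Y := - qx * sin b + qy * cos b).
  assert (HXY : X ^ 2 + Y ^ 2 = sqd x c).
  { unfold X, Y, sqd; fold qx qy. pose proof (cos2_plus_sin2 b). nra. }
  destruct (arg_spec X Y) as [Hb [HX HY]]; [rewrite HXY; apply sqd_gt0, Hxc|].
  replace (sqrt (X ^ 2 + Y ^ 2)) with (dist c x) in HX, HY
    by (rewrite HXY, sqd_comm; reflexivity).
  set (t := arg X Y) in *. rewrite cos_plus, sin_plus.
  pose proof (cos2_plus_sin2 b) as Hb1.
  assert (Eqx : qx = cos b * X - sin b * Y).
  { unfold X, Y. transitivity (qx * (cos b ^ 2 + sin b ^ 2)); [rewrite Hb1|]; ring. }
  assert (Eqy : qy = sin b * X + cos b * Y).
  { unfold X, Y. transitivity (qy * (cos b ^ 2 + sin b ^ 2)); [rewrite Hb1|]; ring. }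
  split; [exact Hb | split].
  - rewrite Eqx, HX, HY; ring.
  - rewrite Eqy, HX, HY; ring.
Qed.

Lemma cos_sin_eq_mod_2PI (p q : R) : cos p = cos q -> sin p = sin q ->
  exists k : Z, p = q + 2 * IZR k * PI.
Proof.
  intros Hc Hs.
  assert (H1 : cos (2 * ((p - q) / 2)) = 1).
  { replace (2 * ((p - q) / 2)) with (p - q) by field.
    rewrite cos_minus, Hc, Hs. pose proof (cos2_plus_sin2 q). nra. }
  rewrite cos_2a_sin in H1.
  destruct (sin_eq_0_0 ((p - q) / 2)) as [k Hk]; [nra|].
  exists k. lra.
Qed.

Lemma in_cone_polar_angle (c x : point) (b w th : R) : x <> c -> in_cone c w th x ->
  exists k : Z, th - w / 2 <= b + polar_angle c b x + 2 * IZR k * PI <= th + w / 2.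
Proof.
  intros Hxc [t [phi [Ht [Hphi Hx]]]].
  destruct (polar_angle_spec c x b Hxc) as [_ [Ex Ey]].
  set (p := b + polar_angle c b x) in *. set (d := dist c x) in *.
  pose proof (dist_gt0 c x (not_eq_sym Hxc)) as Hd; fold d in Hd.
  assert (E1 : t * cos phi = d * cos p) by (rewrite <- Ex, Hx; simpl; ring).
  assert (E2 : t * sin phi = d * sin p) by (rewrite <- Ey, Hx; simpl; ring).
  assert (Ht2 : t ^ 2 = d ^ 2).
  { transitivity (t ^ 2 * (cos phi ^ 2 + sin phi ^ 2)); [rewrite cos2_plus_sin2; ring|].
    transitivity (d ^ 2 * (cos p ^ 2 + sin p ^ 2)); [|rewrite cos2_plus_sin2; ring].
    replace (t ^ 2 * (cos phi ^ 2 + sin phi ^ 2))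
      with ((t * cos phi) ^ 2 + (t * sin phi) ^ 2) by ring.
    rewrite E1, E2; ring. }
  assert (t = d) as -> by (apply Rsqr_inj; [lra | lra | unfold Rsqr; nra]).
  destruct (cos_sin_eq_mod_2PI phi p) as [k Hk].
  - apply (Rmult_eq_reg_l d); lra.
  - apply (Rmult_eq_reg_l d); lra.
  - exists k. lra.
Qed.

Lemma list_argmin {T} (l : list T) (P : T -> Prop) (f : T -> R) :
  (exists x, In x l /\ P x) ->
  exists x0, In x0 l /\ P x0 /\ forall x, In x l -> P x -> f x0 <= f x.
Proof.
  induction l as [|y l IH]; intros [x [Hx HP]]; [destruct Hx|].
  destruct (classic (exists x, In x l /\ P x)) as [Hl|Hl].
  - destruct (IH Hl) as [x0 [H0 [HP0 Hm]]].
    destruct (classic (P y /\ f y <= f x0)) as [[Py Hy]|Hy].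
    + exists y. split; [left; auto|]. split; auto.
      intros z [<-|Hz] Pz; [lra|]. specialize (Hm z Hz Pz); lra.
    + exists x0. split; [right; auto|]. split; auto.
      intros z [<-|Hz] Pz; [|auto]. apply Rnot_lt_le. intros Hlt. apply Hy. split; auto; lra.
  - assert (x = y) as -> by (destruct Hx as [->|Hx]; [auto | exfalso; eauto]).
    exists y. split; [left; auto|]. split; auto.
    intros z [<-|Hz] Pz; [lra | exfalso; eauto].
Qed.

Definition wrap_below (g z : R) : R := z - 2 * PI * IZR (up ((z - g) / (2 * PI))).

Lemma wrap_below_bounds (g z : R) : g - 2 * PI <= wrap_below g z < g.
Proof.
  unfold wrap_below. pose proof PI_RGT_0.
  set (s := (z - g) / (2 * PI)). destruct (archimed s) as [Hs1 Hs2].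
  assert (Es : z - g = 2 * PI * s) by (unfold s; field; lra).
  split; nra.
Qed.

Lemma wrap_below_unique (g z : R) (k : Z) :
  g - 2 * PI <= z + 2 * IZR k * PI < g -> wrap_below g z = z + 2 * IZR k * PI.
Proof.
  intros Hk. pose proof (wrap_below_bounds g z) as Hw. pose proof PI_RGT_0.
  unfold wrap_below in *. set (u := up ((z - g) / (2 * PI))) in *.
  assert (Hku : (k + u)%Z = 0%Z).
  { apply one_IZR_lt1. rewrite plus_IZR. split; nra. }
  replace (IZR u) with (- IZR k) by (rewrite <- opp_IZR; f_equal; lia). ring.
Qed.

(* Finiteness matters: a half-open arc is a limit of closed arcs shifted by less than the
   least gap. *)
Lemma half_open_arc_hit {T} (l : list T) (P : T -> Prop) (f : T -> R) (h : R) :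
  0 < h < PI ->
  (forall g, exists x, In x l /\ P x /\ exists k : Z, g - h <= f x + 2 * IZR k * PI <= g + h) ->
  forall g, exists x, In x l /\ P x /\ exists k : Z, g - 2 * h <= f x + 2 * IZR k * PI < g.
Proof.
  intros Hh Hclosed g. apply NNPP. intros Hnone. pose proof PI_RGT_0.
  destruct (list_argmin l P (fun x => - wrap_below g (f x))) as [x0 [Hx0 [Px0 Hmax]]].
  { destruct (Hclosed 0) as [x [Hx [Px _]]]. eauto. }
  set (w0 := wrap_below g (f x0)) in *.
  pose proof (wrap_below_bounds g (f x0)) as Hb; fold w0 in Hb.
  assert (Hw0 : w0 < g - 2 * h).
  { apply Rnot_le_lt. intros Hle. apply Hnone. exists x0. split; auto. split; auto.
    unfold w0, wrap_below in *. exists (- up ((f x0 - g) / (2 * PI)))%Z.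
    rewrite opp_IZR. lra. }
  set (e := (g - 2 * h - w0) / 2).
  destruct (Hclosed (g - h - e)) as [x [Hx [Px [k Hk]]]].
  assert (Hr : g - 2 * PI <= f x + 2 * IZR k * PI < g) by (unfold e in Hk; lra).
  rewrite <- (wrap_below_unique g (f x) k Hr) in Hk.
  specialize (Hmax x Hx Px). unfold e in Hk. lra.
Qed.

Section OppositeAngle.
Variables (T : Type) (l : list T) (P : T -> Prop) (w : R).
Hypothesis w_bounds : 0 < w < PI.

Let opposite_angle_in_arc_nonneg (f : T -> R) (p : R) : 0 <= p <= PI ->
  (forall x, In x l -> P x -> - PI <= f x <= PI) ->
  (forall g, exists x, In x l /\ P x /\ exists k : Z, g - w / 2 <= f x + 2 * IZR k * PI <= g + w / 2) ->
  (forall x, In x l -> P x -> p <= Rabs (f x)) ->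
  exists x, In x l /\ P x /\ Rabs (f x) + p <= w /\ cos (f x - p) = cos (Rabs (f x) + p).
Proof.
  intros Hp Hf Hclosed Hmin. pose proof PI_RGT_0.
  destruct (half_open_arc_hit l P f (w / 2)) with (g := p) as [x [Hx [Px [k Hk]]]];
    [lra | exact Hclosed |].
  destruct (Hf x Hx Px) as [Hf1 Hf2].
  assert (k = 0%Z) as ->.
  { apply one_IZR_lt1. split; nra. }
  specialize (Hmin x Hx Px).
  assert (Hneg : f x <= - p).
  { destruct (Rle_dec 0 (f x)); [rewrite Rabs_pos_eq in Hmin by lra; simpl in Hk; lra | ].
    rewrite Rabs_left in Hmin by lra. lra. }
  exists x. split; auto. split; auto. simpl in Hk.
  rewrite Rabs_left1 by lra. split; [lra|].
  rewrite <- cos_neg. f_equal. ring.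
Qed.

(* The cosine identity in the conclusion says that [f x] and [p] have opposite signs. *)
Lemma opposite_angle_in_arc (f : T -> R) (p : R) : - PI <= p <= PI ->
  (forall x, In x l -> P x -> - PI <= f x <= PI) ->
  (forall g, exists x, In x l /\ P x /\ exists k : Z, g - w / 2 <= f x + 2 * IZR k * PI <= g + w / 2) ->
  (forall x, In x l -> P x -> Rabs p <= Rabs (f x)) ->
  exists x, In x l /\ P x /\ Rabs (f x) + Rabs p <= w /\
    cos (f x - p) = cos (Rabs (f x) + Rabs p).
Proof.
  intros Hp Hf Hclosed Hmin. destruct (Rle_dec 0 p) as [Hp0|Hp0].
  - rewrite Rabs_pos_eq by lra. apply opposite_angle_in_arc_nonneg; try lra; auto.
    intros x Hx Px. rewrite <- (Rabs_pos_eq p) by lra. auto.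
  - destruct (opposite_angle_in_arc_nonneg (fun x => - f x) (- p)) as [x [Hx [Px [Hw Hc]]]].
    + lra.
    + intros x Hx Px. destruct (Hf x Hx Px). lra.
    + intros g. destruct (Hclosed (- g)) as [x [Hx [Px [k Hk]]]].
      exists x. split; auto. split; auto. exists (- k)%Z. rewrite opp_IZR. lra.
    + intros x Hx Px. rewrite Rabs_Ropp, <- (Rabs_left p) by lra. auto.
    + rewrite Rabs_Ropp in Hw, Hc. rewrite (Rabs_left p) by lra.
      exists x. split; auto. split; auto. split; [lra|].
      rewrite <- Hc, <- cos_neg. f_equal. ring.
Qed.
End OppositeAngle.

(** * Two nodes whose neighbourhoods have no large gap *)

(* [a] and [b] are the lengths |Px|, |Qy| in units of d = |PQ|, [c_i], [s_i] the cosines and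
   sines of the angles QPx and PQy, [cs], [ss] those of their sum. *)
Lemma two_far_neighbours_close_poly (a b c1 s1 c2 s2 cs ss : R) :
  0 < a < 1 -> 0 < b < 1 -> a * a - 2 * a * c1 >= 0 -> b * b - 2 * b * c2 >= 0 ->
  0 < c1 -> 0 < c2 -> 0 <= s1 -> 0 <= s2 -> c1 * c1 + s1 * s1 = 1 -> c2 * c2 + s2 * s2 = 1 ->
  cs = c1 * c2 - s1 * s2 -> cs <= - 1 / 2 -> ss >= 1 / 2 ->
  c2 = cs * c1 + ss * s1 -> c1 = cs * c2 + ss * s2 ->
  a * a + b * b - 2 * a * c1 - 2 * b * c2 + 2 * a * b * cs < 0.
Proof.
  intros Ha Hb Fa Fb Hc1 Hc2 Hs1 Hs2 E1 E2 Ecs Hcs Hss Q1 Q2.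
  assert (ha : a >= 2 * c1).
  { destruct (Rge_dec a (2 * c1)); auto.
    assert (a * (a - 2 * c1) < 0) by (apply Rmult_pos_neg; lra). nra. }
  assert (hb : b >= 2 * c2).
  { destruct (Rge_dec b (2 * c2)); auto.
    assert (b * (b - 2 * c2) < 0) by (apply Rmult_pos_neg; lra). nra. }
  assert (K01 : 1 - 2 * c2 + 4 * c1 * cs <= 0).
  { rewrite Q1. assert (2 * c1 * cs <= - c1) by nra. assert (2 * ss * s1 >= s1) by nra. nra. }
  assert (K10 : 1 - 2 * c1 + 4 * c2 * cs <= 0).
  { rewrite Q2. assert (2 * c2 * cs <= - c2) by nra. assert (2 * ss * s2 >= s2) by nra. nra. }
  assert (c1 <= 1) by nra. assert (c2 <= 1) by nra.
  assert (K11 : 1 - c1 - c2 + cs <= 0).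
  { rewrite Ecs. assert ((1 - c1) * (1 - c2) <= s1 * s2) by (apply Rmult_le_compat; nra). nra. }
  (* On [[2 c_i, 1]] the parabolas [a^2 - 2 a c1], [b^2 - 2 b c2] lie below their chords; the
     resulting bilinear bound is checked at the corners. *)
  set (g := a + b - 2 * c1 - 2 * c2 + 2 * a * b * cs).
  assert (Hfg : a * a + b * b - 2 * a * c1 - 2 * b * c2 + 2 * a * b * cs <= g).
  { unfold g. assert ((a - 2 * c1) * (a - 1) <= 0) by nra. nra. }
  enough (g < 0) by lra. unfold g.
  destruct (Rlt_dec 0 (1 + 2 * b * cs)) as [P1|P1].
  - assert (a * (1 + 2 * b * cs) < 1 + 2 * b * cs) by nra.
    assert (b * (1 + 2 * cs) <= 2 * c2 * (1 + 2 * cs)) by nra.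
    nra.
  - assert (a * (1 + 2 * b * cs) <= 2 * c1 * (1 + 2 * b * cs)) by nra.
    destruct (Rlt_dec 0 (1 + 4 * c1 * cs)) as [P2|P2].
    + assert (b * (1 + 4 * c1 * cs) < 1 + 4 * c1 * cs) by nra.
      nra.
    + assert (b * (1 + 4 * c1 * cs) <= 2 * c2 * (1 + 4 * c1 * cs)) by nra.
      assert (0 < c1 * c2) by nra. nra.
Qed.

Lemma two_far_neighbours_close (a b d t1 t2 : R) :
  0 < a < d -> 0 < b < d ->
  a * a - 2 * a * d * cos t1 >= 0 -> b * b - 2 * b * d * cos t2 >= 0 ->
  PI / 3 < t1 -> PI / 3 < t2 -> t1 + t2 <= 5 * PI / 6 ->
  a * a + b * b + d * d - 2 * a * d * cos t1 - 2 * b * d * cos t2 + 2 * a * b * cos (t1 + t2) < d * d.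
Proof.
  intros Ha Hb Fa Fb H1 H2 H12. pose proof PI_RGT_0.
  assert (c1p : 0 < cos t1) by (apply cos_gt_0; lra).
  assert (c2p : 0 < cos t2) by (apply cos_gt_0; lra).
  assert (s1p : 0 <= sin t1) by (apply sin_ge_0; lra).
  assert (s2p : 0 <= sin t2) by (apply sin_ge_0; lra).
  assert (Hcs : cos (t1 + t2) <= - 1 / 2).
  { assert (cos (t1 + t2) < cos (PI - PI / 3)) by (apply cos_decreasing_1; lra).
    rewrite Rtrigo_facts.cos_pi_minus, cos_PI3 in H0. lra. }
  assert (Hss : sin (t1 + t2) >= 1 / 2).
  { rewrite <- sin_PI_x, <- sin_PI6. apply Rle_ge, sin_incr_1; lra. }
  assert (Q1 : cos t2 = cos (t1 + t2) * cos t1 + sin (t1 + t2) * sin t1).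
  { rewrite <- cos_minus. f_equal. ring. }
  assert (Q2 : cos t1 = cos (t1 + t2) * cos t2 + sin (t1 + t2) * sin t2).
  { rewrite <- cos_minus. f_equal. ring. }
  pose proof (cos2_plus_sin2 t1). pose proof (cos2_plus_sin2 t2).
  assert (Hd : 0 < d) by lra.
  assert (Hd2 : 0 < d * d) by nra.
  set (a' := a / d). set (b' := b / d).
  assert (Ea : a = a' * d) by (unfold a'; field; lra).
  assert (Eb : b = b' * d) by (unfold b'; field; lra).
  rewrite Ea in Ha, Fa. rewrite Eb in Hb, Fb.
  assert (Ka : 0 < a' < 1) by (split; nra).
  assert (Kb : 0 < b' < 1) by (split; nra).
  assert (Ga : a' * a' - 2 * a' * cos t1 >= 0) by nra.
  assert (Gb : b' * b' - 2 * b' * cos t2 >= 0) by nra.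
  pose proof (two_far_neighbours_close_poly a' b' (cos t1) (sin t1) (cos t2) (sin t2)
    (cos (t1 + t2)) (sin (t1 + t2)) Ka Kb Ga Gb c1p c2p s1p s2p
    ltac:(nra) ltac:(nra) (cos_plus t1 t2) Hcs Hss Q1 Q2).
  rewrite Ea, Eb. nra.
Qed.

Lemma cos_Rabs (t : R) : cos (Rabs t) = cos t.
Proof. unfold Rabs. destruct (Rcase_abs t); [apply cos_neg | reflexivity]. Qed.

(* Law of cosines for the path x - P - Q - y, the arm at Q pointing back towards P. *)
Lemma sqd_two_arms (P Q x y : point) (d a b b0 p1 p2 : R) :
  fst Q - fst P = d * cos b0 -> snd Q - snd P = d * sin b0 ->
  fst x - fst P = a * cos (b0 + p1) -> snd x - snd P = a * sin (b0 + p1) ->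
  fst y - fst Q = - (b * cos (b0 + p2)) -> snd y - snd Q = - (b * sin (b0 + p2)) ->
  sqd x y = a * a + b * b + d * d - 2 * a * d * cos p1 - 2 * b * d * cos p2
            + 2 * a * b * cos (p1 - p2).
Proof.
  intros HQ1 HQ2 Hx1 Hx2 Hy1 Hy2. unfold sqd.
  replace (fst x - fst y) with (a * cos (b0 + p1) - d * cos b0 + b * cos (b0 + p2)) by lra.
  replace (snd x - snd y) with (a * sin (b0 + p1) - d * sin b0 + b * sin (b0 + p2)) by lra.
  rewrite cos_minus, !cos_plus, !sin_plus.
  pose proof (cos2_plus_sin2 b0) as C0. pose proof (cos2_plus_sin2 p1) as C1.
  pose proof (cos2_plus_sin2 p2) as C2.
  set (cb := cos b0) in *; set (sb := sin b0) in *; set (c1 := cos p1) in *;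
  set (s1 := sin p1) in *; set (c2 := cos p2) in *; set (s2 := sin p2) in *.
  transitivity ((cb ^ 2 + sb ^ 2) * ((a * c1 - d + b * c2) ^ 2 + (a * s1 + b * s2) ^ 2)); [ring|].
  rewrite C0.
  transitivity (a * a * (c1 ^ 2 + s1 ^ 2) + b * b * (c2 ^ 2 + s2 ^ 2) + d * d
    - 2 * a * d * c1 - 2 * b * d * c2 + 2 * a * b * (c1 * c2 + s1 * s2)); [ring|].
  rewrite C1, C2. ring.
Qed.

Lemma angle_gt_PI3_of_far (b d p : R) : 0 < b < d ->
  b * b - 2 * b * d * cos p >= 0 -> PI / 3 < Rabs p.
Proof.
  intros Hb Hfar. pose proof (Rabs_pos p). pose proof PI_RGT_0. apply Rnot_le_lt. intros Hle.
  assert (Hcos : cos (PI / 3) <= cos (Rabs p)) by (apply cos_decr_1; lra).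
  rewrite cos_PI3, cos_Rabs in Hcos.
  assert (0 <= b * (2 * d * cos p - d)) by (apply Rmult_le_pos; nra).
  assert (0 < b * (d - b)) by (apply Rmult_lt_0_compat; lra).
  nra.
Qed.

Lemma exists_close_pair_of_min_angle (V : list point) (Np : point -> Prop)
    (P Q y : point) (d b0 b1 : R) :
  0 < d ->
  fst Q - fst P = d * cos b0 -> snd Q - snd P = d * sin b0 ->
  fst P - fst Q = d * cos b1 -> snd P - snd Q = d * sin b1 ->
  (forall x, Np x -> In x V /\ x <> P /\ dist P x < d /\ d <= dist x Q) ->
  (forall th, exists x, Np x /\ in_cone P (5 * PI / 6) th x) ->
  y <> Q -> dist Q y < d -> d <= dist y P ->
  (forall x, Np x -> Rabs (polar_angle Q b1 y) <= Rabs (polar_angle P b0 x)) ->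
  exists x, Np x /\ dist x y < d.
Proof.
  intros Hd HQ1 HQ2 HP1 HP2 HNp Hcover Hy Hyd Hyfar Hmin. pose proof PI_RGT_0.
  assert (Cb1 : cos b1 = - cos b0) by (apply (Rmult_eq_reg_l d); lra).
  assert (Sb1 : sin b1 = - sin b0) by (apply (Rmult_eq_reg_l d); lra).
  destruct (polar_angle_spec Q y b1 Hy) as [Hp2 [Ey1 Ey2]].
  set (p2 := polar_angle Q b1 y) in *. set (b := dist Q y) in *.
  assert (Ey1' : fst y - fst Q = - (b * cos (b0 + p2)))
    by (rewrite Ey1, !cos_plus, Cb1, Sb1; ring).
  assert (Ey2' : snd y - snd Q = - (b * sin (b0 + p2)))
    by (rewrite Ey2, !sin_plus, Cb1, Sb1; ring).
  assert (Hb : 0 < b) by (apply dist_gt0; auto).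
  assert (Fy : b * b - 2 * b * d * cos p2 >= 0).
  { pose proof (sqd_ge_of_dist y P d ltac:(lra) Hyfar) as G. rewrite sqd_comm in G.
    rewrite (sqd_two_arms P Q P y d 0 b b0 0 p2) in G; try lra. }
  assert (Hm : PI / 3 < Rabs p2) by (apply (angle_gt_PI3_of_far b d); lra).
  (* Angles at [P] and [Q] are measured from opposite directions, so opposite signs put
     [x] and [y] on the same side of the line [PQ]. *)
  destruct (opposite_angle_in_arc point V Np (5 * PI / 6) ltac:(lra)
              (polar_angle P b0) p2) as [x [_ [Nx [Hsum Hcos]]]].
  - lra.
  - intros x _ Nx. destruct (HNp x Nx) as [_ [Hx _]].
    destruct (polar_angle_spec P x b0 Hx). lra.
  - intros g. destruct (Hcover (b0 + g)) as [x [Nx Hc]].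
    destruct (HNp x Nx) as [Hin [Hx _]].
    destruct (in_cone_polar_angle P x b0 _ _ Hx Hc) as [k Hk].
    exists x. split; auto. split; auto. exists k. lra.
  - intros x _ Nx. apply Hmin, Nx.
  - destruct (HNp x Nx) as [_ [Hx [HxP HxQ]]].
    destruct (polar_angle_spec P x b0 Hx) as [_ [Ex1 Ex2]].
    set (p1 := polar_angle P b0 x) in *. set (a := dist P x) in *.
    assert (Ha : 0 < a) by (apply dist_gt0; auto).
    assert (Fx : a * a - 2 * a * d * cos p1 >= 0).
    { pose proof (sqd_ge_of_dist x Q d ltac:(lra) HxQ) as G.
      rewrite (sqd_two_arms P Q x Q d a 0 b0 p1 0) in G; try lra. }
    pose proof (Hmin x Nx) as Hmx; fold p1 in Hmx.
    exists x. split; auto.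
    apply dist_lt_of_sqd; auto.
    rewrite (sqd_two_arms P Q x y d a b b0 p1 p2), Hcos by lra.
    rewrite <- (cos_Rabs p1) in Fx |- *. rewrite <- (cos_Rabs p2) in Fy |- *.
    apply two_far_neighbours_close; lra.
Qed.

Lemma exists_close_pair (V : list point) (Nu Nv : point -> Prop) (u v : point) :
  u <> v ->
  (forall x, Nu x -> In x V /\ x <> u /\ dist u x < dist u v) ->
  (forall th, exists x, Nu x /\ in_cone u (5 * PI / 6) th x) ->
  (forall y, Nv y -> In y V /\ y <> v /\ dist v y < dist u v) ->
  (forall th, exists y, Nv y /\ in_cone v (5 * PI / 6) th y) ->
  (exists x, Nu x /\ dist x v < dist u v) \/ (exists y, Nv y /\ dist y u < dist u v) \/
  (exists x y, Nu x /\ Nv y /\ dist x y < dist u v).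
Proof.
  intros Huv HNu Hcu HNv Hcv. set (d := dist u v) in *.
  destruct (classic (exists x, Nu x /\ dist x v < d)) as [H1|H1]; [left; auto|].
  destruct (classic (exists y, Nv y /\ dist y u < d)) as [H2|H2]; [right; left; auto|].
  right; right.
  assert (Fu : forall x, Nu x -> d <= dist x v).
  { intros x Nx. apply Rnot_lt_le. intros H. apply H1. eauto. }
  assert (Fv : forall y, Nv y -> d <= dist y u).
  { intros y Ny. apply Rnot_lt_le. intros H. apply H2. eauto. }
  destruct (polar_angle_spec u v 0 (not_eq_sym Huv)) as [_ [E1 E2]].
  assert (Hd : 0 < d) by (apply dist_gt0; auto).
  set (b0 := 0 + polar_angle u 0 v) in *. fold d in E1, E2.
  set (b1 := b0 + PI).
  assert (F1 : fst u - fst v = d * cos b1) by (unfold b1; rewrite neg_cos; lra).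
  assert (F2 : snd u - snd v = d * sin b1) by (unfold b1; rewrite neg_sin; lra).
  destruct (list_argmin V Nu (fun x => Rabs (polar_angle u b0 x))) as [x0 [Hx0 [Nx0 Mx0]]].
  { destruct (Hcu 0) as [x [Nx _]]. exists x. split; [apply HNu|]; auto. }
  destruct (list_argmin V Nv (fun y => Rabs (polar_angle v b1 y))) as [y0 [Hy0 [Ny0 My0]]].
  { destruct (Hcv 0) as [y [Ny _]]. exists y. split; [apply HNv|]; auto. }
  destruct (HNu x0 Nx0) as [_ [Hx0u Hx0d]]. destruct (HNv y0 Ny0) as [_ [Hy0v Hy0d]].
  destruct (Rle_dec (Rabs (polar_angle v b1 y0)) (Rabs (polar_angle u b0 x0))) as [Hc|Hc].
  - destruct (exists_close_pair_of_min_angle V Nu u v y0 d b0 b1) as [x [Nx Hx]]; auto.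
    + intros x Nx. destruct (HNu x Nx) as [? [? ?]]. auto.
    + intros x Nx. specialize (Mx0 x (proj1 (HNu x Nx)) Nx). lra.
    + exists x, y0. auto.
  - destruct (exists_close_pair_of_min_angle V Nv v u x0 d b1 b0) as [y [Ny Hy]]; auto.
    + intros y Ny. destruct (HNv y Ny) as [? [? ?]]. auto.
    + intros y Ny. specialize (My0 y (proj1 (HNv y Ny)) Ny). lra.
    + exists x0, y. rewrite dist_comm. auto.
Qed.

(** * Connectivity of CBTC *)

Lemma connected_of_edges (V : list point) (E1 E2 : point -> point -> Prop) :
  (forall x y, In x V -> In y V -> E1 x y -> connected V E2 x y) ->
  forall x y, connected V E1 x y -> connected V E2 x y.
Proof.
  intros HE x y H. induction H as [x y [Hx [Hy Hxy]]|x|x y z _ IHxy _ IHyz].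
  - exact (HE x y Hx Hy Hxy).
  - apply rt_refl.
  - exact (rt_trans _ _ x y z IHxy IHyz).
Qed.

Lemma filter_length_le {A} (f g : A -> bool) (l : list A) :
  (forall x, In x l -> f x = true -> g x = true) ->
  (length (filter f l) <= length (filter g l))%nat.
Proof.
  induction l as [|x l IH]; intros Hfg; simpl; [lia|].
  assert (IH' : (length (filter f l) <= length (filter g l))%nat) by (apply IH; auto with datatypes).
  destruct (f x) eqn:Ef; [rewrite (Hfg x (or_introl eq_refl) Ef) | destruct (g x)]; simpl; lia.
Qed.

Lemma filter_length_lt {A} (f g : A -> bool) (l : list A) :
  (forall x, In x l -> f x = true -> g x = true) ->
  (exists x, In x l /\ f x = false /\ g x = true) ->
  (length (filter f l) < length (filter g l))%nat.
Proof.
  induction l as [|y l IH]; intros Hfg [x [Hx [Hf Hg]]]; [destruct Hx|]. simpl.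
  destruct Hx as [->|Hx].
  - rewrite Hf, Hg. simpl.
    pose proof (filter_length_le f g l ltac:(auto with datatypes)). lia.
  - assert (IH' : (length (filter f l) < length (filter g l))%nat)
      by (apply IH; eauto with datatypes).
    destruct (f y) eqn:Ef; [rewrite (Hfg y (or_introl eq_refl) Ef) | destruct (g y)]; simpl; lia.
Qed.

Definition closer_pairs (V : list point) (d : R) : nat :=
  length (filter (fun pq => if Rlt_dec (dist (fst pq) (snd pq)) d then true else false)
                 (list_prod V V)).

Lemma closer_pairs_lt (V : list point) (x y : point) (d : R) :
  In x V -> In y V -> dist x y < d -> (closer_pairs V (dist x y) < closer_pairs V d)%nat.
Proof.
  intros Hx Hy Hd. apply filter_length_lt.
  - intros [p q] _. simpl.
    destruct (Rlt_dec (dist p q) (dist x y)), (Rlt_dec (dist p q) d); auto; lra.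
  - exists (x, y). split; [apply in_prod; auto|]. simpl.
    destruct (Rlt_dec (dist x y) (dist x y)), (Rlt_dec (dist x y) d); auto; lra.
Qed.

Lemma in_cone_widen (u p : point) (a a' th : R) : a <= a' -> in_cone u a th p -> in_cone u a' th p.
Proof.
  intros Ha [t [phi [Ht [Hphi Hp]]]]. exists t, phi. repeat split; auto; lra.
Qed.

Section Cbtc.
Variables (V : list point) (r : nat -> R) (k : nat) (a : R).
Hypothesis k_pos : (1 <= k)%nat.
Hypothesis r_incr : forall i, (1 <= i < k)%nat -> r i < r (S i).

Lemma r_le_last (i : nat) : (1 <= i <= k)%nat -> r i <= r k.
Proof.
  intros Hi. assert (Hstep : forall n, (i + n <= k)%nat -> r i <= r (i + n)%nat).
  { induction n as [|n IH]; intros Hn; [rewrite Nat.add_0_r; lra|].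
    rewrite Nat.add_succ_r. pose proof (r_incr (i + n) ltac:(lia)). specialize (IH ltac:(lia)). lra. }
  replace k with (i + (k - i))%nat by lia. apply Hstep; lia.
Qed.

Lemma cbtc_index_exists (u : point) : exists i, cbtc_index V r k a u i.
Proof.
  assert (H : forall n, (forall j, (1 <= j <= n)%nat -> has_gap (S_lvl V r j u) u a) \/
     exists i, (1 <= i <= n)%nat /\ ~ has_gap (S_lvl V r i u) u a /\
        forall j, (1 <= j < i)%nat -> has_gap (S_lvl V r j u) u a).
  { induction n as [|n [IH|[i [Hi [Hg Hj]]]]].
    - left. intros j Hj. lia.
    - destruct (classic (has_gap (S_lvl V r (S n) u) u a)) as [G|G].
      + left. intros j Hj. destruct (Nat.eq_dec j (S n)) as [->|Hne]; auto. apply IH; lia.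
      + right. exists (S n). split; [lia|]. split; auto. intros j Hj. apply IH; lia.
    - right. exists i. split; [lia|]. auto. }
  destruct (H k) as [G|[i Hi]]; [exists k; right | exists i; left]; auto.
Qed.

Lemma cbtc_index_range (u : point) (i : nat) : cbtc_index V r k a u i -> (1 <= i <= k)%nat.
Proof. intros [[H _]|[-> _]]; lia. Qed.

Lemma E_alpha_sub_E_R (x y : point) :
  In x V -> In y V -> E_alpha V r k a x y -> E_R V (r k) x y.
Proof.
  intros Hx Hy [[i [Hi [_ [Hyx Hd]]]]|[i [Hi [_ [Hxy Hd]]]]];
    pose proof (r_le_last i (cbtc_index_range _ _ Hi)); repeat split; auto.
  - lra.
  - rewrite dist_comm. lra.
Qed.

Hypothesis a_le : a <= 5 * PI / 6.

Lemma cbtc_neighbours_of_dropped_edge (p q : point) :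
  In q V -> q <> p -> dist p q <= r k -> ~ N_alpha V r k a p q ->
  exists i, (forall x, S_lvl V r i p x ->
               N_alpha V r k a p x /\ In x V /\ x <> p /\ dist p x < dist p q) /\
            (forall th, exists x, S_lvl V r i p x /\ in_cone p (5 * PI / 6) th x).
Proof.
  intros Hq Hqp Hpq Hdrop. destruct (cbtc_index_exists p) as [i Hi].
  assert (Hri : r i < dist p q).
  { apply Rnot_le_lt. intros Hle. apply Hdrop. exists i. repeat split; auto. }
  exists i. split.
  - intros x Sx. split; [exists i; auto|]. destruct Sx as [? [? ?]]. repeat split; auto; lra.
  - destruct Hi as [[_ [Hng _]]|[-> _]]; [|lra].
    intros th. apply NNPP. intros Hn. apply Hng. exists th. intros x Sx Hc.
    apply Hn. exists x. split; auto. apply in_cone_widen with a; auto.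
Qed.

Lemma E_R_edge_alpha_connected (u v : point) :
  In u V -> In v V -> u <> v -> dist u v <= r k -> connected V (E_alpha V r k a) u v.
Proof.
  remember (closer_pairs V (dist u v)) as n eqn:Hn. revert u v Hn.
  induction n as [n IH] using lt_wf_ind. intros u v Hn Hu Hv Huv Hd.
  assert (Edge : forall x y, In x V -> In y V -> N_alpha V r k a x y ->
                  connected V (E_alpha V r k a) x y)
    by (intros x y Hx Hy Hxy; apply rt_step; repeat split; auto; left; auto).
  assert (Edge' : forall x y, In x V -> In y V -> N_alpha V r k a y x ->
                  connected V (E_alpha V r k a) x y)
    by (intros x y Hx Hy Hxy; apply rt_step; repeat split; auto; right; auto).
  assert (Shorter : forall x y, In x V -> In y V -> x <> y -> dist x y < dist u v ->
                      connected V (E_alpha V r k a) x y).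
  { intros x y Hx Hy Hxy Hlt. apply (IH (closer_pairs V (dist x y))); auto; [|lra].
    rewrite Hn. apply closer_pairs_lt; auto. }
  destruct (classic (N_alpha V r k a u v)) as [Huv'|Hdu]; [apply Edge; auto|].
  destruct (classic (N_alpha V r k a v u)) as [Hvu'|Hdv]; [apply Edge'; auto|].
  destruct (cbtc_neighbours_of_dropped_edge u v Hv (not_eq_sym Huv) Hd Hdu)
    as [iu [Nu Cu]].
  destruct (cbtc_neighbours_of_dropped_edge v u Hu Huv ltac:(rewrite dist_comm; lra) Hdv)
    as [iv [Nv Cv]].
  rewrite dist_comm in Nv.
  destruct (exists_close_pair V (S_lvl V r iu u) (S_lvl V r iv v) u v Huv)
    as [[x [Sx Hx]]|[[y [Sy Hy]]|[x [y [Sx [Sy Hxy]]]]]];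
    [exact (fun z Sz => proj2 (Nu z Sz)) | exact Cu | exact (fun z Sz => proj2 (Nv z Sz))
    | exact Cv | | | ].
  - destruct (Nu x Sx) as [Nux [Hxv [Hxu Hux]]].
    apply rt_trans with x; [apply Edge; auto|].
    apply Shorter; auto. intros ->. lra.
  - destruct (Nv y Sy) as [Nvy [Hyv [Hyu Hvy]]].
    apply rt_trans with y; [|apply Edge'; auto].
    apply Shorter; auto; [intros E; subst y; rewrite dist_comm in Hvy; lra | rewrite dist_comm; lra].
  - destruct (Nu x Sx) as [Nux [Hxv [Hxu Hux]]]. destruct (Nv y Sy) as [Nvy [Hyv [Hyu Hvy]]].
    apply rt_trans with x; [apply Edge; auto|].
    apply rt_trans with y; [|apply Edge'; auto].
    destruct (classic (x = y)) as [->|Hne]; [apply rt_refl | apply Shorter; auto].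
Qed.

End Cbtc.

Theorem theorem1 (V : list point) (Rmax : R) (k : nat) (r : nat -> R) (a : R) :
  NoDup V ->
  0 < Rmax ->
  (1 <= k)%nat ->
  0 < r 1%nat ->
  (forall i, (1 <= i < k)%nat -> r i < r (S i)) ->
  r k = Rmax ->
  0 < a -> a <= 5 * PI / 6 ->
  forall u v, In u V -> In v V ->
    (connected V (E_alpha V r k a) u v <-> connected V (E_R V Rmax) u v).
Proof.
  intros _ _ Hk _ Hr <- _ Ha u v _ _. split; apply connected_of_edges.
  - intros x y Hx Hy Hxy. apply rt_step. split; [exact Hx | split; [exact Hy |]].
    apply (E_alpha_sub_E_R V r k a); auto.
  - intros x y Hx Hy [_ [_ [Hxy Hd]]]. apply E_R_edge_alpha_connected; auto.
Qed.
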